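(* If $p>1-1/e^2$, then for every $n$, $0\le x_0(n)\le 1-\frac{2}{\log b}$.
   Context: Let $p\in(0,1)$ be constant, $q=1-p$, $b=1/q$, $\log$ the natural logarithm, $\gamma=\gamma(n)=2\log_b n-2\log_b\log_b n-2\log_b 2$, $\Delta=\gamma-\lfloor\gamma\rfloor\in[0,1)$. Define $\varphi_n(x)=(1-\Delta+x)\log_b(1-\Delta+x)+(1-\Delta)(\Delta-x)/2$, and let $x_0=x_0(n)$ be the smallest nonnegative $x$ with $\varphi_n(x)\le0$ (well defined since $\varphi_n(\Delta)=0$, and $x_0\in[0,\Delta]$). *)

From Stdlib Require Import Reals Lra.
Open Scope R_scope.

Definition qq (p : R) : R := 1 - p.
Definition bb (p : R) : R := / qq p.

Definition logb (p x : R) : R := ln x / ln (bb p).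

Definition gam (p : R) (n : nat) : R :=
  2 * logb p (INR n) - 2 * logb p (logb p (INR n)) - 2 * logb p 2.

(* Delta = gamma - floor gamma  (Int_part is the floor in Stdlib) *)
Definition Delta (p : R) (n : nat) : R :=
  gam p n - IZR (Int_part (gam p n)).

Definition phi (p : R) (n : nat) (x : R) : R :=
  (1 - Delta p n + x) * logb p (1 - Delta p n + x)
  + (1 - Delta p n) * (Delta p n - x) / 2.

Definition is_x0 (p : R) (n : nat) (x : R) : Prop :=
  0 <= x /\ phi p n x <= 0 /\ (forall y, 0 <= y < x -> 0 < phi p n y).

(* Since [phi Delta = 0], the least nonnegative zero of the continuous [phi]
   exists and lies in [0, Delta].  With [L = ln b] and [t = 1 - Delta + x],
   [ln t <= t - 1 = x - Delta] gives
   [phi x <= (x - Delta) * (t / L - (1 - Delta) / 2)].  If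
   [Delta > 1 - 2/L] the second factor is nonnegative at [x = 1 - 2/L] (this
   uses [L > 2], i.e. [p > 1 - e^-2]), so [phi (1 - 2/L) <= 0] and
   [x0 <= 1 - 2/L]; otherwise [x0 <= Delta <= 1 - 2/L] directly. *)
From Stdlib Require Import Reals Lra.
From Coquelicot Require Import Coquelicot.
Open Scope R_scope.

Lemma least_nonpos_point (f : R -> R) (a : R) :
  0 <= a -> f a <= 0 -> (forall x, 0 <= x -> continuity_pt f x) ->
  exists m, 0 <= m /\ f m <= 0 /\ (forall y, 0 <= y < m -> 0 < f y).
Proof.
intros Ha0 Ha Hcont.
set (E := fun y => 0 <= y /\ forall z, 0 <= z < y -> 0 < f z).
assert (E0 : E 0) by (split; [lra | intros z Hz; lra]).
assert (Ebound : is_upper_bound E a).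
{ intros y [Hy HE]. apply Rnot_lt_le; intros Hay.
  specialize (HE a ltac:(lra)); lra. }
destruct (completeness E (ex_intro _ a Ebound) (ex_intro _ 0 E0)) as [m [Hub Hlub]].
assert (Hm0 : 0 <= m) by exact (Hub 0 E0).
assert (Hbelow : forall y, 0 <= y < m -> 0 < f y).
{ intros y Hy. apply Rnot_le_lt; intros Hfy.
  enough (is_upper_bound E y) by (specialize (Hlub y H); lra).
  intros e [He HE]. apply Rnot_lt_le; intros Hye.
  specialize (HE y ltac:(lra)); lra. }
exists m; repeat split; [exact Hm0 | | exact Hbelow].
apply Rnot_lt_le; intros Hfm.
destruct (Hcont m Hm0 (f m) Hfm) as [d [Hd Hnear]].
enough (E (m + d / 2)) by (specialize (Hub _ H); lra).
split; [lra |]. intros z Hz.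
destruct (Rlt_le_dec z m) as [Hzm | Hzm]; [apply Hbelow; lra |].
destruct (Req_dec z m) as [-> | Hne]; [exact Hfm |].
assert (Hdist : R_dist (f z) (f m) < f m).
{ apply Hnear. split; [split; [exact I | auto] |].
  simpl. unfold R_dist. rewrite Rabs_right; lra. }
unfold R_dist in Hdist. apply Rabs_def2 in Hdist. lra.
Qed.

Lemma Delta_bounds (p : R) (n : nat) : 0 <= Delta p n < 1.
Proof. unfold Delta. destruct (base_Int_part (gam p n)). lra. Qed.

Lemma phi_Delta (p : R) (n : nat) : phi p n (Delta p n) = 0.
Proof.
unfold phi, logb. replace (1 - Delta p n + Delta p n) with 1 by ring.
rewrite ln_1. lra.
Qed.

Lemma continuity_pt_phi (p : R) (n : nat) (x : R) :
  0 < 1 - Delta p n + x -> continuity_pt (phi p n) x.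
Proof.
intros Hx. apply continuity_pt_filterlim, (ex_derive_continuous (phi p n)).
unfold phi, logb. auto_derive. exact Hx.
Qed.

Lemma ln_bb_gt_2 (p : R) :
  p < 1 -> 1 - / (exp 1 ^ 2) < p -> 2 < ln (bb p).
Proof.
intros Hp1 Hp.
assert (Hexp2 : exp 1 ^ 2 = exp 2).
{ rewrite <- Rsqr_pow2. unfold Rsqr. rewrite <- exp_plus. f_equal; lra. }
rewrite Hexp2 in Hp.
unfold bb, qq. rewrite ln_Rinv by lra.
enough (ln (1 - p) < ln (/ exp 2))
  by (rewrite ln_Rinv, ln_exp in H by apply exp_pos; lra).
apply ln_increasing; lra.
Qed.

Lemma phi_le_linear (p : R) (n : nat) (x : R) :
  0 < ln (bb p) -> 0 < 1 - Delta p n + x ->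
  phi p n x <= (x - Delta p n) *
    ((1 - Delta p n + x) / ln (bb p) - (1 - Delta p n) / 2).
Proof.
intros HL Ht. unfold phi, logb.
set (D := Delta p n) in *. set (L := ln (bb p)) in *.
set (t := 1 - D + x) in *.
assert (Hln : ln t <= t - 1).
{ pose proof (exp_ineq1_le (ln t)) as H. rewrite exp_ln in H; lra. }
assert (t * (ln t / L) <= t * ((t - 1) / L)).
{ apply Rmult_le_compat_l; [lra |].
  apply Rmult_le_compat_r; [apply Rlt_le, Rinv_0_lt_compat |]; lra. }
replace (t - 1) with (x - D) in * by (unfold t; ring).
replace ((x - D) * (t / L - (1 - D) / 2))
  with (t * ((x - D) / L) + (1 - D) * (D - x) / 2) by (field; lra).
lra.
Qed.

Lemma phi_threshold_nonpos (p : R) (n : nat) :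
  2 < ln (bb p) -> 1 - 2 / ln (bb p) < Delta p n ->
  phi p n (1 - 2 / ln (bb p)) <= 0.
Proof.
intros HL HD. destruct (Delta_bounds p n) as [HD0 HD1].
assert (Hu : 0 < / ln (bb p) < 1 / 2).
{ split; [apply Rinv_0_lt_compat; lra |].
  rewrite Rdiv_1_l. apply Rinv_lt_contravar; lra. }
eapply Rle_trans; [apply phi_le_linear; lra |].
set (D := Delta p n) in *. set (u := / ln (bb p)) in *.
replace (2 / ln (bb p)) with (2 * u) in * by (unfold u, Rdiv; ring).
replace ((1 - D + (1 - 2 * u)) / ln (bb p)) with ((2 - D - 2 * u) * u)
  by (unfold u, Rdiv; ring).
(* [(2 - D - 2u) u - (1 - D)/2 = (1 - 2u) (u - (1 - D)/2)] *)
assert (Hfactor : 0 <= (2 - D - 2 * u) * u - (1 - D) / 2) by nra.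
apply Rmult_le_0_r; lra.
Qed.

Theorem lemma4 (p : R) (hp0 : 0 < p) (hp1 : p < 1)
  (hp : 1 - / (exp 1 ^ 2) < p) (n : nat) (hn : (2 <= n)%nat) :
  (exists x, is_x0 p n x) /\
  (forall x0, is_x0 p n x0 -> 0 <= x0 <= 1 - 2 / ln (bb p)).
Proof.
pose proof (ln_bb_gt_2 p hp1 hp) as HL.
destruct (Delta_bounds p n) as [HD0 HD1].
split.
- apply (least_nonpos_point (phi p n) (Delta p n)); [lra | | ].
  + rewrite phi_Delta; lra.
  + intros x Hx. apply continuity_pt_phi; lra.
- intros x0 [Hx0 [_ Hmin]]. split; [exact Hx0 |].
  assert (H2L : 2 / ln (bb p) < 1)
    by (apply (Rdiv_lt_1 2 (ln (bb p))); lra).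
  apply Rnot_lt_le; intros Hgt.
  destruct (Rle_lt_dec (Delta p n) (1 - 2 / ln (bb p))) as [HD | HD].
  + specialize (Hmin (Delta p n) ltac:(lra)). rewrite phi_Delta in Hmin. lra.
  + specialize (Hmin (1 - 2 / ln (bb p)) ltac:(lra)).
    pose proof (phi_threshold_nonpos p n HL HD). lra.
Qed.
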